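(* Let $G$ and $H$ be finite isoclinic groups. If $G$ is a GVZ-group, then $H$ is a GVZ-group; and if $G$ is a nested GVZ-group, then $H$ is a nested GVZ-group.
   Context: Two finite groups $G,H$ are isoclinic if there are isomorphisms $\theta:G/Z(G)\to H/Z(H)$ and $\phi:G'\to H'$ such that for all $g_1,g_2\in G$, whenever $h_1\in\theta(g_1Z(G))$ and $h_2\in\theta(g_2Z(G))$, one has $\phi([g_1,g_2])=[h_1,h_2]$, where $[g,h]=g^{-1}h^{-1}gh$ and $G'=[G,G]$. For $\chi\in\operatorname{Irr}(G)$ (irreducible complex characters), $Z(\chi)=\{g\in G:|\chi(g)|=\chi(1)\}$. $G$ is a GVZ-group if every $\chi\in\operatorname{Irr}(G)$ satisfies $\chi(g)=0$ for all $g\in G\setminus Z(\chi)$. $G$ is nested if for all $\chi,\psi\in\operatorname{Irr}(G)$, $Z(\chi)\subseteq Z(\psi)$ or $Z(\psi)\subseteq Z(\chi)$; a nested GVZ-group is a nested group that is a GVZ-group. *)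

From mathcomp Require Import all_boot all_order all_algebra all_fingroup all_solvable all_field all_character.
Set Implicit Arguments. Unset Strict Implicit. Unset Printing Implicit Defensive.
Import GRing.Theory Num.Theory.
Local Open Scope group_scope.

(* Isoclinism: isomorphisms theta : G/Z(G) -> H/Z(H) and phi : G' -> H'
   compatible with commutators. [~ x, y] = x^-1 * y^-1 * x * y in MathComp. *)
Definition isoclinic (gT hT : finGroupType) (G : {group gT}) (H : {group hT}) : Prop :=
  exists (theta : {morphism G / 'Z(G) >-> coset_of 'Z(H)})
         (phi : {morphism G^`(1) >-> hT}),
    [/\ isom (G / 'Z(G)) (H / 'Z(H)) theta,
        isom G^`(1) H^`(1) phi &
        forall g1 g2 h1 h2, g1 \in G -> g2 \in G -> h1 \in H -> h2 \in H ->
          coset 'Z(H) h1 = theta (coset 'Z(G) g1) ->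
          coset 'Z(H) h2 = theta (coset 'Z(G) g2) ->
          phi [~ g1, g2] = [~ h1, h2]].

Definition Zchi (gT : finGroupType) (G : {group gT}) (i : Iirr G) : {set gT} :=
  [set g in G | (`|'chi[G]_i g| == 'chi[G]_i 1%g)%R].

Definition GVZ (gT : finGroupType) (G : {group gT}) : Prop :=
  forall (i : Iirr G) (g : gT), g \in G -> g \notin Zchi i -> ('chi[G]_i g = 0)%R.

Definition nested (gT : finGroupType) (G : {group gT}) : Prop :=
  forall i j : Iirr G, (Zchi i \subset Zchi j) \/ (Zchi j \subset Zchi i).

Definition nested_GVZ (gT : finGroupType) (G : {group gT}) : Prop :=
  nested G /\ GVZ G.

From mathcomp Require Import all_boot all_order all_algebra all_fingroup all_solvable all_field all_character.
From mathcomp Require Import zify.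
Set Implicit Arguments. Unset Strict Implicit. Unset Printing Implicit Defensive.
Import GRing.Theory Num.Theory.
Local Open Scope ring_scope.
Local Open Scope group_scope.

(* Both properties can be read off the commutator maps x |-> [g, x].  Since
   g \in Z(chi) iff [g, G] \subset ker chi, G is nested iff the subgroups
   [g, G] form a chain.  By the second orthogonality relation, |C_G(g)| is
   |G : [g, G]| (the contribution of the characters of G / [g, G], in which g
   is central) plus the sum of |chi g|^2 over the remaining chi, all of which
   vanish at g exactly when G is GVZ; as |G : C_G(g)| = |g^G| = |{[g, x]}|,
   G is GVZ iff every set {[g, x] | x \in G} is already the group [g, G].
   An isoclinism maps {[g, x] | x \in G} onto {[h, y] | y \in H} whenever
   g Z(G) corresponds to h Z(H), hence [g, G] onto [h, H]. *)

Section CommutatorCharacterisations.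
Variables (gT : finGroupType) (G : {group gT}).

Lemma Zchi_cfcenter (i : Iirr G) : Zchi i = ('Z('chi[G]_i))%CF.
Proof.
apply/setP=> g; rewrite inE; case Gg: (g \in G) => /=.
  by rewrite irr_cfcenterE.
by apply/esym; apply: contraFF Gg => /(subsetP (cfcenter_sub _)).
Qed.

Lemma Zchi_sub (i : Iirr G) : Zchi i \subset G.
Proof. by apply/subsetP=> x; rewrite inE => /andP[]. Qed.

Lemma mem_Zchi_commg (i : Iirr G) g : g \in G ->
  (g \in Zchi i) = ([~: [set g], G] \subset cfker 'chi[G]_i).
Proof.
move=> Gg; rewrite Zchi_cfcenter.
have nsKZ := cfker_center_normal 'chi[G]_i.
have nKg : g \in 'N(cfker 'chi[G]_i) by rewrite (subsetP (cfker_norm _)).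
rewrite -(quotientGK nsKZ) cfcenter_eq_center morphpreE in_setI nKg.
rewrite [_ \in _ @^-1: _]inE /= /center in_setI mem_quotient //=.
by rewrite -sub1set -quotient_set1 // quotient_cents2 ?sub1set ?cfker_norm.
Qed.

Lemma commg1_sub_der g : g \in G -> [~: [set g], G] \subset G^`(1).
Proof. by move=> Gg; rewrite derg1 commgSS ?sub1set. Qed.

Lemma commg_set1_sub_der g : g \in G -> commg_set [set g] G \subset G^`(1).
Proof. by move=> Gg; apply: subset_trans (subset_gen _) (commg1_sub_der Gg). Qed.

Lemma commg1_normal g : g \in G -> [~: [set g], G] <| G.
Proof.
move=> Gg; rewrite /normal commg_normr andbT.
exact: subset_trans (commg1_sub_der Gg) (der_sub 1 G).
Qed.

Lemma quotient_cent1_commg g (N := [~: [set g], G]) : g \in G ->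
  'C_(G / N)[coset N g] = G / N.
Proof.
move=> Gg; have nNg : g \in 'N(N).
  by rewrite (subsetP (normal_norm (commg1_normal Gg))).
apply/setIidPl; rewrite sub_cent1.
by have := quotient_cents2r (subxx N); rewrite quotient_set1 // sub1set; apply.
Qed.

Lemma sum_irr_cfker_commg g (N := [~: [set g], G]) : g \in G ->
  (\sum_(i | N \subset cfker 'chi[G]_i) `|'chi[G]_i g| ^+ 2 = #|(G / N)%g|%:R)%R.
Proof.
move=> Gg; have GNg : coset N g \in G / N by apply: mem_quotient.
rewrite -sum_norm_irr_quo ?commg1_normal //.
have := second_orthogonality_relation (coset N g) GNg.
rewrite mulrb class_refl quotient_cent1_commg // => <-.
by apply: eq_bigr => i _; rewrite normCK.
Qed.

Lemma card_cent1_commg_split g (N := [~: [set g], G]) : g \in G ->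
  (#|'C_G[g]|%:R = #|(G / N)%g|%:R +
     \sum_(i | ~~ (N \subset cfker 'chi[G]_i)) `|'chi[G]_i g| ^+ 2 :> algC)%R.
Proof.
move=> Gg; have := second_orthogonality_relation g Gg.
rewrite mulrb class_refl => <-; rewrite -(eq_bigr _ (fun _ _ => normCK _)).
by rewrite (bigID (fun i => N \subset cfker 'chi[G]_i)) /= sum_irr_cfker_commg.
Qed.

Lemma card_commg_set1 g : g \in G -> #|commg_set [set g] G| = #|g ^: G|.
Proof.
move=> Gg; have -> : commg_set [set g] G = mulg g^-1 @: (g ^: G).
  apply/setP=> z; apply/imset2P/imsetP.
    by case=> x y /set1P -> Gy ->; exists (g ^ y); rewrite ?memJ_class.
  by case=> _ /imsetP[y Gy ->] ->; exists g y; rewrite ?set11.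
by rewrite card_imset //; apply: mulgI.
Qed.

Lemma card_cent1_quotient_commgE g (N := [~: [set g], G]) : g \in G ->
  (#|'C_G[g]| == #|G / N|)%N = (commg_set [set g] G == N).
Proof.
move=> Gg; have [sNG nNG] := andP (commg1_normal Gg).
have := subset_leq_card (subset_gen (commg_set [set g] G)).
rewrite eqEcard subset_gen /= card_commg_set1 // -index_cent1 card_quotient //.
have := Lagrange (subsetIl G 'C[g]); have := Lagrange sNG.
have := cardG_gt0 'C_G[g]; have := cardG_gt0 [~: [set g], G].
move: #|'C_G[g]| #|G : 'C_G[g]| #|N| #|G : N| => a b c d.
by move=> c_gt0 a_gt0 Ecd Eab le_bc; apply/eqP/idP => E; nia.
Qed.

Lemma GVZ_commgP :
  GVZ G <-> {in G, forall g, commg_set [set g] G = [~: [set g], G]}.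
Proof.
split=> [GVZ_G g Gg | commgE i g Gg notZg].
  apply/eqP; rewrite -card_cent1_quotient_commgE // -(eqr_nat algC).
  rewrite card_cent1_commg_split // big1 ?addr0 // => i.
  by rewrite -mem_Zchi_commg // => /GVZ_G -> //; rewrite normr0 expr0n.
have := card_cent1_commg_split Gg.
move/eqP: (commgE g Gg); rewrite -card_cent1_quotient_commgE // => /eqP ->.
move=> cardE; have /esym/psumr_eq0P sum0 := addrI _ (etrans (addr0 _) cardE).
have /eqP : (`|'chi[G]_i g| ^+ 2 = 0)%R.
  by apply: sum0 => [j _|]; rewrite ?exprn_ge0 // -mem_Zchi_commg.
by rewrite expf_eq0 normr_eq0 => /andP[_ /eqP].
Qed.

Lemma irr_cfker_separation (N : {group gT}) (M : {set gT}) :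
  N <| G -> ~~ (M \subset N) ->
  exists i, (N \subset cfker 'chi[G]_i) && ~~ (M \subset cfker 'chi[G]_i).
Proof.
move=> nsNG notsMN; apply/existsP; apply: contraR notsMN.
rewrite negb_exists => /forallP noSep.
rewrite -(cap_cfker_normal nsNG); apply/bigcapsP=> i sNi.
by have := noSep i; rewrite sNi negbK.
Qed.

Lemma nested_commgP : nested G <->
  {in G &, forall g1 g2, [~: [set g1], G] \subset [~: [set g2], G]
                      \/ [~: [set g2], G] \subset [~: [set g1], G]}.
Proof.
split=> [nestedG g1 g2 G1 G2 | chain i j].
  have [|notsN12] := boolP ([~: [set g1], G] \subset [~: [set g2], G]); first by left.
  have [|notsN21] := boolP ([~: [set g2], G] \subset [~: [set g1], G]); first by right.
  have [i /andP[N1i notsN2i]] := irr_cfker_separation (commg1_normal G1) notsN21.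
  have [j /andP[N2j notsN1j]] := irr_cfker_separation (commg1_normal G2) notsN12.
  have [/subsetP sZij | /subsetP sZji] := nestedG i j.
    by case/negP: notsN1j; rewrite -mem_Zchi_commg // sZij ?mem_Zchi_commg.
  by case/negP: notsN2i; rewrite -mem_Zchi_commg // sZji ?mem_Zchi_commg.
have [|/subsetPn[g1 Z1i notZ1j]] := boolP (Zchi i \subset Zchi j); first by left.
right; apply/subsetP=> g2 Z2j; apply/idPn=> notZ2i.
have G1 := subsetP (Zchi_sub i) _ Z1i; have G2 := subsetP (Zchi_sub j) _ Z2j.
move: Z1i notZ1j Z2j notZ2i; rewrite !mem_Zchi_commg // => Z1i notZ1j Z2j notZ2i.
have [sN12 | sN21] := chain g1 g2 G1 G2.
  by rewrite (subset_trans sN12 Z2j) in notZ1j.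
by rewrite (subset_trans sN21 Z1i) in notZ2i.
Qed.

End CommutatorCharacterisations.

Section Isoclinism.
Variables (gT hT : finGroupType) (G : {group gT}) (H : {group hT}).
Variables (theta : {morphism G / 'Z(G) >-> coset_of 'Z(H)})
          (phi : {morphism G^`(1) >-> hT}).
Hypothesis theta_onto : theta @* (G / 'Z(G)) = H / 'Z(H).
Hypothesis phi_commg : forall g1 g2 h1 h2,
  g1 \in G -> g2 \in G -> h1 \in H -> h2 \in H ->
  coset 'Z(H) h1 = theta (coset 'Z(G) g1) ->
  coset 'Z(H) h2 = theta (coset 'Z(G) g2) ->
  phi [~ g1, g2] = [~ h1, h2].

Lemma isoclinic_coset_lift g : g \in G ->
  exists2 h, h \in H & coset 'Z(H) h = theta (coset 'Z(G) g).
Proof.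
move=> Gg; have : theta (coset 'Z(G) g) \in H / 'Z(H).
  by rewrite -theta_onto mem_morphim // mem_quotient.
by case/morphimP=> h _ Hh ->; exists h.
Qed.

Lemma isoclinic_coset_preimage h : h \in H ->
  exists2 g, g \in G & coset 'Z(H) h = theta (coset 'Z(G) g).
Proof.
move=> Hh; have : coset 'Z(H) h \in theta @* (G / 'Z(G)).
  by rewrite theta_onto mem_quotient.
by case/morphimP=> _ _ /morphimP[g _ Gg ->] ->; exists g.
Qed.

Variables (g : gT) (h : hT).
Hypotheses (Gg : g \in G) (Hh : h \in H)
           (thetagh : coset 'Z(H) h = theta (coset 'Z(G) g)).

Lemma isoclinic_commg_set : phi @: commg_set [set g] G = commg_set [set h] H.
Proof.
apply/setP=> z; apply/imsetP/imset2P.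
  case=> _ /imset2P[_ x /set1P -> Gx ->] ->.
  have [y Hy thetaxy] := isoclinic_coset_lift Gx.
  by exists h y; rewrite ?set11 // (phi_commg Gg Gx Hh Hy).
case=> _ y /set1P -> Hy ->.
have [x Gx thetaxy] := isoclinic_coset_preimage Hy.
by exists [~ g, x]; rewrite ?imset2_f ?set11 // (phi_commg Gg Gx Hh Hy).
Qed.

Lemma isoclinic_commg : phi @* [~: [set g], G] = [~: [set h], H].
Proof.
by rewrite morphim_gen ?commg_set1_sub_der // morphimEsub ?commg_set1_sub_der //
  isoclinic_commg_set.
Qed.

Lemma isoclinic_commg_setE :
  (commg_set [set g] G = [~: [set g], G]) ->
  commg_set [set h] H = [~: [set h], H].
Proof.
move=> commgE; rewrite -isoclinic_commg -isoclinic_commg_set.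
by rewrite -morphimEsub ?commg_set1_sub_der // commgE.
Qed.

End Isoclinism.

Theorem theorem1p4 (gT hT : finGroupType) (G : {group gT}) (H : {group hT}) :
  isoclinic G H ->
  (GVZ G -> GVZ H) /\ (nested_GVZ G -> nested_GVZ H).
Proof.
move=> [theta [phi [isoT _ phi_commg]]]; have [_ theta_onto] := isomP isoT.
have GVZ_GH : GVZ G -> GVZ H.
  move/GVZ_commgP=> commgE; apply/GVZ_commgP=> h Hh.
  have [g Gg thetagh] := isoclinic_coset_preimage theta_onto Hh.
  apply: (isoclinic_commg_setE theta_onto phi_commg Gg Hh thetagh).
  exact: commgE.
split=> // -[nestedG GVZ_G]; split; last exact: GVZ_GH.
apply/nested_commgP=> h1 h2 H1 H2.
have [g1 G1 theta1] := isoclinic_coset_preimage theta_onto H1.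
have [g2 G2 theta2] := isoclinic_coset_preimage theta_onto H2.
rewrite -(isoclinic_commg theta_onto phi_commg G1 H1 theta1).
rewrite -(isoclinic_commg theta_onto phi_commg G2 H2 theta2).
by have [s12|s21] := (nested_commgP G).1 nestedG g1 g2 G1 G2; [left|right];
  apply: morphimS.
Qed.
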